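(* Let $P\subset\mathbb{R}^d$ be a finite point set satisfying the standing condition, let $\varepsilon\in(0,1)$, and let $Q_\varepsilon$ be the set returned by the algorithm H-GRMR described in the context on input $P$, its extreme point set $X$, its inner-product Delaunay graph $\mathcal{G}(P)$, and $\varepsilon$. Then $Q_\varepsilon$ is an $\varepsilon$-regret set of $P$, i.e., $l(Q_\varepsilon)\le\varepsilon$.
   Context: For finite $Q\subset\mathbb{R}^d$ and unit $x$, $\omega(x,Q)=\max_{p\in Q}\langle p,x\rangle$. Standing condition: $\omega(x,P)>0$ for all $x\in\mathbb{S}^{d-1}$. Regret ratio $l_x(Q)=1-\omega(x,Q)/\omega(x,P)$; $l(Q)=\max_{x\in\mathbb{S}^{d-1}}l_x(Q)$; $Q\subseteq P$ is an $\varepsilon$-regret set if $l(Q)\le\varepsilon$. Voronoi cell $R(p)=\{x\ne0:\langle p,x\rangle\ge\omega(x,P)\}$; extreme points $X=\{t_1,\dots,t_m\}$ are the points with $R(p)\ne\varnothing$. The inner-product Delaunay graph $\mathcal{G}(P)$ is the undirected graph on $X$ with an edge $\{t_i,t_j\}$ iff $R(t_i)\cap R(t_j)\ne\varnothing$; $N(t)$ denotes the neighbors of $t$. For $t_i,t_j\in X$, $\varepsilon_{ij}$ is the optimal value of the linear program: maximize $1-\langle t_i,x\rangle$ over $x\in\mathbb{R}^d$ subject to $\langle t_j-t,x\rangle\ge0$ for all $t\in N(t_j)$ and $\langle t_j,x\rangle=1$ (with $\varepsilon_{ij}=+\infty$ if unbounded). Algorithm H-GRMR: Step 1: start with a directed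 graph $H_\varepsilon$ on $X$ with no edges; for each $t_i$, mark $t_i$ visited, enqueue all of $N(t_i)$, and while the queue is nonempty dequeue $t_j$; if $t_j$ is not visited, mark it visited, compute $\varepsilon_{ij}$, and if $\varepsilon_{ij}\le\varepsilon$ add edge $t_i\to t_j$ to $H_\varepsilon$ and enqueue all of $N(t_j)$ (visited marks are reset for each $t_i$). Step 2: let $Dom(t_i)=\{t_i\}\cup\{t_j: t_i\to t_j \text{ in } H_\varepsilon\}$; set $Q_\varepsilon=\varnothing$, $U=X$; while $U\ne\varnothing$, pick $t^*\in X\setminus Q_\varepsilon$ maximizing $|Dom(t^* )\cap U|$, add $t^*$ to $Q_\varepsilon$ and remove $Dom(t^* )$ from $U$. Return $Q_\varepsilon$. *)

From HB Require Import structures.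
From mathcomp Require Import all_boot all_order all_algebra.
From mathcomp Require Import boolp classical_sets reals constructive_ereal ereal.
Set Implicit Arguments. Unset Strict Implicit. Unset Printing Implicit Defensive.
Import Order.TTheory GRing.Theory Num.Theory.
Local Open Scope ring_scope.
Local Open Scope classical_set_scope.

Section RegretDefs.
Variables (R : realType) (d : nat).
Notation V := 'rV[R]_d.

Definition ip (p x : V) : R := \sum_(i < d) p ord0 i * x ord0 i.

Definition unit_sphere : set V := [set x | ip x x = 1].

(* omega(x,Q) = max_{p in Q} <p,x>  (Q finite, given as a seq; for the
   empty sequence the value is the default <0,x> = 0, never used) *)
Definition omega (x : V) (Q : seq V) : R :=
  \big[Num.max/ip (head 0 Q) x]_(p <- Q) ip p x.

Definition standing (P : seq V) : Prop :=
  forall x, unit_sphere x -> 0 < omega x P.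

Definition lx (P Q : seq V) (x : V) : R := 1 - omega x Q / omega x P.
Definition lQ (P Q : seq V) : R := sup [set lx P Q x | x in unit_sphere].

Definition eps_regret_set (P Q : seq V) (eps : R) : Prop :=
  {subset Q <= P} /\ lQ P Q <= eps.

Definition vcell (P : seq V) (p : V) : set V :=
  [set x | x != 0 /\ omega x P <= ip p x].

Definition extreme (P : seq V) : seq V :=
  [seq p <- P | asbool (vcell P p !=set0)].

Definition dedge (P : seq V) (t t' : V) : bool :=
  (t != t') && asbool (vcell P t `&` vcell P t' !=set0).

Definition nbrs (P : seq V) (t : V) : seq V :=
  [seq t' <- extreme P | dedge P t t'].

(* eps_ij : optimal value of the LP (sup of an empty feasible set is -oo,
   unbounded gives +oo) *)
Definition eps_ij (P : seq V) (ti tj : V) : \bar R :=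
  ereal_sup [set ((1 - ip ti x)%:E) | x in
     [set x : V | (forall t, t \in nbrs P tj -> 0 <= ip (tj - t) x)
                  /\ ip tj x = 1]].

(* Step 1: BFS from t_i (visited, queue), collecting out-neighbours in H_eps.
   [fuel] only ensures structural termination. *)
Fixpoint bfs (P : seq V) (eps : R) (ti : V) (fuel : nat)
  (visited queue out : seq V) : seq V :=
  match fuel with
  | 0%N => out
  | S f =>
    match queue with
    | [::] => out
    | tj :: q =>
      if tj \in visited then bfs P eps ti f visited q out
      else if asbool (eps_ij P ti tj <= eps%:E)%E
           then bfs P eps ti f (tj :: visited) (q ++ nbrs P tj) (tj :: out)
           else bfs P eps ti f (tj :: visited) q out
    end
  end.

(* fuel bound: at most |X| vertices get visited, each enqueues <= |X| items *)
Definition bfs_fuel (P : seq V) : nat := ((size (extreme P)).+1 ^ 2)%N.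

Definition Hout (P : seq V) (eps : R) (ti : V) : seq V :=
  bfs P eps ti (bfs_fuel P) [:: ti] (nbrs P ti) [::].

Definition Dom (P : seq V) (eps : R) (ti : V) : seq V := ti :: Hout P eps ti.

Definition covers (P : seq V) (eps : R) (t : V) (U : seq V) : nat :=
  size [seq u <- U | u \in Dom P eps t].

(* Step 2: greedy selection, with arbitrary tie-breaking.
   greedy P eps U Q Qf : starting from state (U, Q_eps = Q), the loop can
   terminate returning Qf. *)
Inductive greedy (P : seq V) (eps : R) : seq V -> seq V -> seq V -> Prop :=
| greedy_done Q : greedy P eps [::] Q Q
| greedy_step U Q Qf t :
    U != [::] ->
    t \in extreme P -> t \notin Q ->
    (forall t', t' \in extreme P -> t' \notin Q ->
       (covers P eps t' U <= covers P eps t U)%N) ->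
    greedy P eps [seq u <- U | u \notin Dom P eps t] (t :: Q) Qf ->
    greedy P eps U Q Qf.

Definition HGRMR_output (P : seq V) (eps : R) (Q : seq V) : Prop :=
  greedy P eps (extreme P) [::] Q.

End RegretDefs.

(* For a unit direction x let t be a point of P with <t,x> = omega(x,P) > 0;
   then x lies in the Voronoi cell of t, so t is an extreme point and the
   greedy step puts some s with t in Dom(s) into Q_eps.  Either s = t, or the
   breadth-first search of s accepted t, i.e. eps_st <= eps.  The rescaled
   direction x / <t,x> is feasible for the linear program defining eps_st,
   because t maximizes <., x> over all of P and a fortiori over N(t); hence
   1 - <s,x>/<t,x> <= eps_st <= eps, which bounds l_x(Q_eps).  Taking the
   supremum over x gives l(Q_eps) <= eps. *)
From HB Require Import structures.
From mathcomp Require Import all_boot all_order all_algebra.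
From mathcomp Require Import boolp classical_sets reals constructive_ereal ereal.
Import Order.TTheory GRing.Theory Num.Theory.
Local Open Scope ring_scope.

Set Implicit Arguments.
Unset Strict Implicit.
Unset Printing Implicit Defensive.

Lemma bigmax_seq_mem {disp : Order.disp_t} {T : orderType disp} {I : eqType}
    (r : seq I) (x : T) (F : I -> T) :
  \big[Order.max/x]_(i <- r) F i \in x :: map F r.
Proof.
rewrite big_seq; apply: (big_ind (fun v => v \in x :: map F r)).
- exact: mem_head.
- by move=> a b aS bS; rewrite /Order.max; case: ifP.
- by move=> i ir; rewrite inE map_f ?orbT.
Qed.

Lemma sup_image_le {R : realType} {T : Type} (A : set T) (f : T -> R) (e : R) :
  0 <= e -> (forall x, A x -> f x <= e) -> sup [set f x | x in A] <= e.
Proof.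
move=> e0 fA; have [[_ [x Ax _]]|/set0P/negP/negbNE/eqP->] :=
  pselect ([set f x | x in A] !=set0)%classic; last by rewrite sup0.
by apply: ge_sup; [exists (f x), x | move=> _ [z Az <-]; apply: fA].
Qed.

Section Regret.
Variables (R : realType) (d : nat).
Notation V := 'rV[R]_d.
Implicit Types (P Q U : seq V) (p s t x : V) (eps : R).

Lemma ip0l x : ip 0 x = 0.
Proof. by rewrite /ip big1 // => i _; rewrite mxE mul0r. Qed.

Lemma ipZr p x (c : R) : ip p (c *: x) = c * ip p x.
Proof. by rewrite /ip mulr_sumr; apply: eq_bigr => i _; rewrite mxE mulrCA. Qed.

Lemma ipBl p s x : ip (p - s) x = ip p x - ip s x.
Proof. by rewrite /ip -sumrB; apply: eq_bigr => i _; rewrite !mxE mulrBl. Qed.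

Lemma unit_sphere_neq0 x : unit_sphere x -> x != 0.
Proof.
by apply: contraPN => /eqP->; rewrite /unit_sphere /= ip0l => /esym/eqP; rewrite oner_eq0.
Qed.

Lemma omega_nil x : omega x [::] = 0.
Proof. by rewrite /omega big_nil ip0l. Qed.

Lemma omega_ge x Q p : p \in Q -> ip p x <= omega x Q.
Proof. by move=> pQ; apply: (le_bigmax_seq _ _ xpredT (fun q => ip q x) pQ). Qed.

Lemma omega_attained x P : P != [::] -> exists2 p, p \in P & omega x P = ip p x.
Proof.
case: P => // a s _; have := bigmax_seq_mem (a :: s) (ip a x) (fun q => ip q x).
rewrite -/(omega x (a :: s)) inE => /orP[/eqP->|/mapP[p ps ->]].
  by exists a; rewrite ?mem_head.
by exists p.
Qed.

Lemma extreme_sub P : {subset extreme P <= P}.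
Proof. by move=> p; rewrite mem_filter => /andP[]. Qed.

Lemma nbrs_sub P t : {subset nbrs P t <= P}.
Proof. by move=> p; rewrite mem_filter => /andP[_ /extreme_sub]. Qed.

Lemma mem_extreme P p x :
  p \in P -> x != 0 -> omega x P <= ip p x -> p \in extreme P.
Proof. by move=> pP x0 px; rewrite mem_filter pP andbT; apply/asboolP; exists x. Qed.

Lemma ratio_le_eps_ij P s t x :
  omega x P = ip t x -> 0 < ip t x ->
  ((1 - ip s x / ip t x)%:E <= eps_ij P s t)%E.
Proof.
move=> tmax tpos; apply: ereal_sup_ubound.
exists ((ip t x)^-1 *: x); last by rewrite ipZr mulrC.
split; last by rewrite ipZr mulVf ?gt_eqF.
move=> t' /nbrs_sub t'P.
by rewrite ipZr ipBl mulr_ge0 ?invr_ge0 ?(ltW tpos) // subr_ge0 -tmax omega_ge.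
Qed.

Lemma mem_bfs P eps s fuel visited queue out t :
  t \in bfs P eps s fuel visited queue out ->
  t \in out \/ (eps_ij P s t <= eps%:E)%E.
Proof.
elim: fuel visited queue out => [|f IH] visited queue out /=; first by left.
case: queue => [|tj q]; first by left.
case: ifP => _; first exact: IH.
case: ifP => [/asboolP tj_ok|_] /IH[]; try by [left | right].
by rewrite inE => /predU1P[->|]; [right | left].
Qed.

Lemma mem_Hout P eps s t : t \in Hout P eps s -> (eps_ij P s t <= eps%:E)%E.
Proof. by case/mem_bfs. Qed.

Lemma Dom_ratio_le P eps s t x : 0 <= eps ->
  omega x P = ip t x -> 0 < ip t x -> t \in Dom P eps s ->
  1 - ip s x / ip t x <= eps.
Proof.
move=> eps0 tmax tpos; rewrite inE => /predU1P[<-|/mem_Hout st].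
  by rewrite divff ?gt_eqF // subrr.
by rewrite -lee_fin (le_trans (ratio_le_eps_ij s tmax tpos)).
Qed.

Lemma greedy_sub P eps U Q Qf : greedy P eps U Q Qf -> {subset Q <= Qf}.
Proof.
elim=> {U Q Qf} [Q s //|U Q Qf t _ _ _ _ _ QQf s sQ].
by apply: QQf; rewrite inE sQ orbT.
Qed.

Lemma greedy_out P eps U Q Qf : greedy P eps U Q Qf ->
  {subset Qf <= Q ++ extreme P}.
Proof.
elim=> {U Q Qf} [Q s|U Q Qf t _ tX _ _ _ QfQ s /QfQ].
  by rewrite mem_cat => ->.
by rewrite !mem_cat inE => /orP[/predU1P[->|->]|->]; rewrite ?tX ?orbT.
Qed.

Lemma greedy_cover P eps U Q Qf : greedy P eps U Q Qf ->
  forall u, u \in U -> exists2 s, s \in Qf & u \in Dom P eps s.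
Proof.
elim=> {U Q Qf} [//|U Q Qf t _ _ _ _ g cover u uU].
have [uDt|uDt] := boolP (u \in Dom P eps t); last first.
  by apply: cover; rewrite mem_filter uDt.
by exists t => //; apply: (greedy_sub g); rewrite mem_head.
Qed.

Lemma HGRMR_output_sub P eps Q : HGRMR_output P eps Q -> {subset Q <= P}.
Proof. by move=> /greedy_out QX s /QX /extreme_sub. Qed.

Lemma lx_HGRMR_output_le P eps Q x : standing P -> 0 <= eps ->
  HGRMR_output P eps Q -> unit_sphere x -> lx P Q x <= eps.
Proof.
move=> Pstd eps0 HQ xS; have omega_pos := Pstd x xS.
have P_neq0 : P != [::] by apply: contraTneq omega_pos => ->; rewrite omega_nil ltxx.
have [t tP tmax] := omega_attained x P_neq0.
have tpos : 0 < ip t x by rewrite -tmax.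
have tX : t \in extreme P.
  by apply: (mem_extreme tP (unit_sphere_neq0 xS)); rewrite tmax.
have [s sQ tDs] := greedy_cover HQ tX.
apply: le_trans (Dom_ratio_le eps0 tmax tpos tDs).
by rewrite /lx tmax lerB // ler_pM2r ?invr_gt0 //; exact: omega_ge.
Qed.

End Regret.

Theorem theorem4 (R : realType) (d : nat) (P : seq 'rV[R]_d) (eps : R) :
  uniq P -> standing P -> 0 < eps < 1 ->
  forall Q : seq 'rV[R]_d, HGRMR_output P eps Q -> eps_regret_set P Q eps.
Proof.
move=> _ Pstd /andP[/ltW eps0 _] Q HQ; split; first exact: HGRMR_output_sub HQ.
by apply: sup_image_le => // x; apply: lx_HGRMR_output_le.
Qed.
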